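(* Let $n\in\{2,6,10,\dots\}$ and consider $f_{n+4}$ on $\{0,1\}^{n+4}$. (a) If $x_{n+2}=x_{n+3}=x_{n+4}=0$, then changing $x_{n+1}$ from $0$ to $1$ strictly increases $f_{n+4}$ if and only if $x_i=1$ for all $i\le n$. (b) If $x_{n+4}=0$, then changing $x_{n+3}$ from $0$ to $1$ strictly increases $f_{n+4}$ if and only if $x_{n+1}=x_{n+2}=1$ and $x_i=0$ for all $i\le n$. (c) Changing $x_{n+4}$ from $0$ to $1$ strictly increases $f_{n+4}$ if and only if $x_{n+3}=1$.
   Context: For $n\in\{2,6,10,\dots\}$ define polynomials $f_n$ in variables $x_1,\dots,x_n$ (evaluated on $\{0,1\}^n$) recursively. Set $f_2(x_1,x_2):=x_1+x_2$. For $n\in\{2,6,10,\dots\}$, write $\mathbf{x}=(x_1,\dots,x_n)$, $S:=\sum_{i=1}^n x_i$, let $M_n:=\max_{\{0,1\}^n} f_n-\min_{\{0,1\}^n} f_n+1$, and define $f_{n+4}(\mathbf{x},x_{n+1},x_{n+2},x_{n+3},x_{n+4}) := f_n(\mathbf{x}) - M_n n^2 x_{n+1} + M_n(n+1) S x_{n+1} - x_{n+2} - 2M_n n S x_{n+2} + 2M_n n(n+2) x_{n+1}x_{n+2} - 4 S x_{n+3} + 2x_{n+1}x_{n+3} + 2x_{n+2}x_{n+3} - 3x_{n+3} + (M_n(n-1)+4) S x_{n+4} + 6M_n n^2 x_{n+3}x_{n+4} - 5M_n n^2 x_{n+4}$. *)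

From HB Require Import structures.
From mathcomp Require Import all_boot all_order all_algebra.
Set Implicit Arguments. Unset Strict Implicit. Unset Printing Implicit Defensive.
Import Order.TTheory GRing.Theory Num.Theory.
Local Open Scope ring_scope.

(* Assignments x in {0,1}^n are encoded as x : nat -> bool with 1-based
   indices: x i is the value of the variable x_i (only x_1..x_n matter). *)

Definition X (x : nat -> bool) (i : nat) : int := (nat_of_bool (x i))%:Z.

Definition ext (n : nat) (v : {ffun 'I_n -> bool}) : nat -> bool :=
  fun i => if i is j.+1 then odflt false (omap v (insub j)) else false.

Definition allfalse : nat -> bool := fun _ => false.

Definition fmax (n : nat) (f : (nat -> bool) -> int) : int :=
  \big[Num.max/f allfalse]_(v : {ffun 'I_n -> bool}) f (ext v).
Definition fmin (n : nat) (f : (nat -> bool) -> int) : int :=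
  \big[Num.min/f allfalse]_(v : {ffun 'I_n -> bool}) f (ext v).

Definition Mof (n : nat) (f : (nat -> bool) -> int) : int :=
  fmax n f - fmin n f + 1.

(* F k = f_{4k+2} *)
Fixpoint F (k : nat) : (nat -> bool) -> int :=
  match k with
  | 0 => fun x => X x 1 + X x 2
  | k'.+1 =>
    let n := (4 * k' + 2)%N in
    let f := F k' in
    let M := Mof n f in
    let nz : int := n%:Z in
    fun x =>
      let S := \sum_(1 <= i < n.+1) X x i in
      let x1 := X x (n + 1) in let x2 := X x (n + 2) in
      let x3 := X x (n + 3) in let x4 := X x (n + 4) in
      f x - M * nz ^+ 2 * x1 + M * (nz + 1) * S * x1 - x2
        - 2 * M * nz * S * x2 + 2 * M * nz * (nz + 2) * x1 * x2
        - 4 * S * x3 + 2 * x1 * x3 + 2 * x2 * x3 - 3 * x3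
        + (M * (nz - 1) + 4) * S * x4 + 6 * M * nz ^+ 2 * x3 * x4
        - 5 * M * nz ^+ 2 * x4
  end.

(* f_n for n in {2,6,10,...} *)
Definition f (n : nat) : (nat -> bool) -> int := F (n %/ 4).

Definition upd (x : nat -> bool) (i : nat) (b : bool) : nat -> bool :=
  fun j => if j == i then b else x j.

From mathcomp Require Import all_boot all_order all_algebra.
From mathcomp Require Import zify.
Import Order.TTheory GRing.Theory Num.Theory.
Local Open Scope ring_scope.

(* Write n = 4k+2.  Since x_{n+1}, ..., x_{n+4} do not occur in f_n, flipping
   one of them changes f_{n+4} by an affine expression in the number S of ones
   among x_1..x_n and the other new variables, with coefficients built from
   M = M_n > 0 and n >= 2.  Each claim is then a sign analysis of that
   increment over 0 <= S <= n. *)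

Definition Fstep (M N c S x1 x2 x3 x4 : int) : int :=
  c - M * N ^+ 2 * x1 + M * (N + 1) * S * x1 - x2
    - 2 * M * N * S * x2 + 2 * M * N * (N + 2) * x1 * x2
    - 4 * S * x3 + 2 * x1 * x3 + 2 * x2 * x3 - 3 * x3
    + (M * (N - 1) + 4) * S * x4 + 6 * M * N ^+ 2 * x3 * x4
    - 5 * M * N ^+ 2 * x4.

Section FstepIncrements.

Variables (M N c S : int).
Hypotheses (M_gt0 : 0 < M) (N_ge2 : 2 <= N) (S_ge0 : 0 <= S) (S_leN : S <= N).

Lemma Fstep_x1_gain : Fstep M N c S 0 0 0 0 < Fstep M N c S 1 0 0 0 <-> S = N.
Proof.
rewrite /Fstep; split => [lt_c|->]; last by nia.
have [//|neqSN] := eqVneq S N.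
have : M * (N + 1) * S <= M * (N + 1) * (N - 1) by apply: ler_wpM2l; lia.
nia.
Qed.

Lemma Fstep_x3_gain (b1 b2 : bool) :
  Fstep M N c S b1 b2 0 0 < Fstep M N c S b1 b2 1 0 <-> [/\ b1, b2 & S = 0].
Proof.
rewrite /Fstep; case: b1; case: b2 => /=; split=> [lt|[]// _ _ ->]; try lia.
by split=> //; lia.
Qed.

Lemma Fstep_x4_gain (b1 b2 b3 : bool) :
  Fstep M N c S b1 b2 b3 0 < Fstep M N c S b1 b2 b3 1 <-> b3.
Proof.
have MN2_gt0 : 0 < M * N ^+ 2 by apply: mulr_gt0; [|apply: exprn_gt0]; lia.
have : M * (N - 1) * S <= M * (N - 1) * N.
  by apply: ler_wpM2l; [apply: mulr_ge0|]; lia.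
by rewrite /Fstep; case: b1; case: b2; case: b3 => /=; split => //; nia.
Qed.

End FstepIncrements.

Lemma Mof_gt0 n g : 0 < Mof n g.
Proof.
have fmin_le : fmin n g <= g allfalse.
  apply: (big_rec (fun y => y <= g allfalse)) => // v y _.
  by rewrite ge_min => ->; rewrite orbT.
have fmax_ge : g allfalse <= fmax n g.
  apply: (big_rec (fun y => g allfalse <= y)) => // v y _.
  by rewrite le_max => ->; rewrite orbT.
rewrite /Mof; lia.
Qed.

Definition ones n (x : nat -> bool) : nat := \sum_(1 <= i < n.+1) x i.

Lemma sum_X_ones n x : \sum_(1 <= i < n.+1) X x i = (ones n x)%:Z.
Proof.
by apply: (big_rec2 (fun a b => a = Posz b)) => // i a b _ ->; rewrite PoszD.
Qed.

Lemma ones_le n x : (ones n x <= n)%N.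
Proof.
rewrite /ones -[X in (_ <= X)%N]card_ord.
rewrite big_add1 big_mkord -sum1_card; apply: leq_sum => i _; exact: leq_b1.
Qed.

Lemma ones_eq n x : ones n x = n <-> (forall i, (1 <= i <= n)%N -> x i).
Proof.
elim: n => [|n IH]; first by split=> [_ i|_]; [lia|rewrite /ones big_geq].
rewrite /ones big_nat_recr //= -/(ones n x); have := ones_le n x.
case xn: (x n.+1) => /= le_n; last first.
  split=> [|/(_ n.+1)]; first lia.
  by rewrite leqnn xn => /(_ isT).
rewrite addn1; split=> [[/IH xi] i /andP[i_ge1]|xi].
  by rewrite leq_eqVlt ltnS => /orP[/eqP->//|i_le]; apply: xi; rewrite i_ge1.
by rewrite (proj2 IH) // => i /andP[i_ge1 i_le]; apply: xi; lia.
Qed.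

Lemma ones_eq0 n x : ones n x = 0%N <-> (forall i, (1 <= i <= n)%N -> x i = false).
Proof.
rewrite /ones; split=> [/eqP|xi].
  rewrite sum_nat_seq_eq0 => /allP xi i i_in.
  by move: (xi i); rewrite mem_index_iota; case: (x i) => //=; lia.
by apply: big1_seq => i; rewrite mem_index_iota => /andP[_ /xi->].
Qed.

Lemma X_upd x j b i : X (upd x j b) i = if i == j then (nat_of_bool b)%:Z else X x i.
Proof. by rewrite /X /upd; case: (i == j). Qed.

Lemma F_eq_on k x y :
  (forall i, (i <= 4 * k + 2)%N -> x i = y i) -> F k x = F k y.
Proof.
elim: k x y => [|k IH] x y eq_xy /=; first by rewrite /X !eq_xy.
rewrite (IH x y) => [|i ?]; last by apply: eq_xy; lia.
have -> : \sum_(1 <= i < (4 * k + 2).+1) X x i = \sum_(1 <= i < (4 * k + 2).+1) X y i.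
  by apply: eq_big_nat => i /andP[_ ?]; rewrite /X eq_xy //; lia.
by rewrite /X !eq_xy //; lia.
Qed.

Lemma F_upd k x j b : (4 * k + 2 < j)%N -> F k (upd x j b) = F k x.
Proof. by move=> ltj; apply: F_eq_on => i le_i; rewrite /upd ifN_eq //; lia. Qed.

Lemma ones_upd n x j b : (n < j)%N -> ones n (upd x j b) = ones n x.
Proof.
move=> ltj; apply: eq_big_nat => i /andP[_ le_i].
by rewrite /upd ifN_eq //; lia.
Qed.

Lemma F_succ_upd k x j b : let n := (4 * k + 2)%N in (n < j)%N ->
  F k.+1 (upd x j b) =
  Fstep (Mof n (F k)) n%:Z (F k x) (ones n x)%:Z
    (X (upd x j b) (n + 1)) (X (upd x j b) (n + 2))
    (X (upd x j b) (n + 3)) (X (upd x j b) (n + 4)).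
Proof. by move=> n ltj; rewrite /= sum_X_ones ones_upd ?F_upd. Qed.

Theorem mainTheorem7 (n : nat) (hn : (n %% 4 = 2)%N) :
  (forall x : nat -> bool,
     x (n + 2)%N = false -> x (n + 3)%N = false -> x (n + 4)%N = false ->
     (f (n + 4) (upd x (n + 1) false) < f (n + 4) (upd x (n + 1) true)
      <-> (forall i : nat, (1 <= i <= n)%N -> x i = true))) /\
  (forall x : nat -> bool,
     x (n + 4)%N = false ->
     (f (n + 4) (upd x (n + 3) false) < f (n + 4) (upd x (n + 3) true)
      <-> x (n + 1)%N = true /\ x (n + 2)%N = true /\
          (forall i : nat, (1 <= i <= n)%N -> x i = false))) /\
  (forall x : nat -> bool,
     (f (n + 4) (upd x (n + 4) false) < f (n + 4) (upd x (n + 4) true)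
      <-> x (n + 3)%N = true)).
Proof.
have [k ->] : exists k, n = (4 * k + 2)%N by exists (n %/ 4)%N; lia.
have -> : f (4 * k + 2 + 4) = F k.+1 by rewrite /f; congr F; lia.
have M_gt0 := Mof_gt0 (4 * k + 2) (F k).
have N_ge2 : 2 <= (4 * k + 2)%:Z by lia.
split; [|split] => x; have := ones_le (4 * k + 2) x;
  (rewrite !F_succ_upd; try lia); rewrite !X_upd !eqn_add2l /= /X => le_ones.
- by move=> -> -> ->; rewrite -ones_eq Fstep_x1_gain //; split=> [[]|->].
- move=> ->; rewrite -ones_eq0 Fstep_x3_gain //.
  by split=> [[-> -> []]|[-> [-> ->]]].
- by rewrite Fstep_x4_gain.
Qed.
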